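(* In the ACS setup of the context, with $M_k=\dfrac{|P_k\cap\mathcal{H}_0|}{1+|N^-_k|}$, one has $$\mathbb{E}\big[M_k\,\big|\,|P_k\cap\mathcal{H}_0|+|N^-_k|\big]\le\frac{m}{n-k+1},\qquad\text{hence}\qquad \mathbb{E}[M_k]\le\frac{m}{n-k+1}.$$
   Context: Setup. Let $n,m\ge 1$, $0\le k\le n$. For $i\in[n+m]$ let $X_i\in\mathcal{X}$, $Y_i\in\mathbb{R}$, $\mathcal{C}_i\subseteq\mathbb{R}$, with $\{(X_i,Y_i,\mathcal{C}_i)\}_{i}$ jointly exchangeable. $(A_1,\dots,A_{n+m})$ is uniform over binary vectors with exactly $n$ zeros and $m$ ones, independent of the data ($A_i=0$: labeled, $A_i=1$: test). $\mathcal{H}_0=\{i:A_i=1,Y_i\in\mathcal{C}_i\}$. $(\pi(1),\dots,\pi(k))$ is a uniformly random ordered choice of $k$ distinct indices from $\{i:A_i=0\}$, independent of all else; $U_k=[n+m]\setminus\{\pi(1),\dots,\pi(k)\}$, $N^-_k=\{i\in U_k:A_i=0,Y_i\in\mathcal{C}_i\}$, $P_k=\{i\in U_k:A_i=1\}$. *)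

From HB Require Import structures.
From mathcomp Require Import all_boot all_order all_algebra all_fingroup.
From mathcomp Require Import all_classical all_reals all_analysis.
Set Implicit Arguments. Unset Strict Implicit. Unset Printing Implicit Defensive.
Import Order.TTheory GRing.Theory Num.Theory.
Local Open Scope classical_set_scope.
Local Open Scope ring_scope.

(* One data point (X_i, Y_i, C_i) lives in Xt * R * set R.
   inC t  <=>  Y_i \in C_i. *)
Definition inC {Xt : Type} {R : realType} (t : Xt * R * set R) : bool :=
  t.1.2 \in t.2.

Section ACS.
Variables (n m k : nat).
Local Notation N := (n + m)%N.

(* a i = true  <->  A_i = 1 (test point);  a i = false <-> A_i = 0 (labeled). *)
Definition valid_A (a : 'I_N -> bool) : bool := #|[pred i | ~~ a i]| == n.

(* p = (pi(1),...,pi(k)): an ordered choice of k distinct labeled indices. *)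
Definition valid_pi (a : 'I_N -> bool) (p : 'I_k -> 'I_N) : bool :=
  injectiveb p && [forall j, ~~ a (p j)].

Definition removed (p : 'I_k -> 'I_N) : {set 'I_N} := [set p j | j : 'I_k].

(* z i = true <-> Y_i \in C_i *)
Definition H0set (a z : 'I_N -> bool) : {set 'I_N} := [set i | a i && z i].
Definition Nminus (a z : 'I_N -> bool) (p : 'I_k -> 'I_N) : {set 'I_N} :=
  [set i | (i \notin removed p) && ~~ a i && z i].
Definition Pset (a : 'I_N -> bool) (p : 'I_k -> 'I_N) : {set 'I_N} :=
  [set i | (i \notin removed p) && a i].

Definition acsS (a z : 'I_N -> bool) (p : 'I_k -> 'I_N) : nat :=
  (#|Pset a p :&: H0set a z| + #|Nminus a z p|)%N.

Definition acsM {R : realType} (a z : 'I_N -> bool) (p : 'I_k -> 'I_N) : R :=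
  (#|Pset a p :&: H0set a z|)%:R / (1 + #|Nminus a z p|)%N%:R.

End ACS.

Definition data_event {Om Xt : Type} {R : realType} {N : nat}
  (X : 'I_N -> Om -> Xt) (Y : 'I_N -> Om -> R) (C : 'I_N -> Om -> set R)
  (B : 'I_N -> set (Xt * R * set R)) : set Om :=
  \bigcap_i [set w | B i (X i w, Y i w, C i w)].

(* Joint exchangeability of {(X_i,Y_i,C_i)}_i w.r.t. the sigma-algebra G on
   the space of triples: the joint law is invariant under every permutation
   of indices (checked on measurable rectangles, which generate the product
   sigma-algebra). *)
Definition exchangeable {d} {Om : measurableType d} {Xt : Type} {R : realType}
  {N : nat} (P : probability Om R) (G : set (set (Xt * R * set R)))
  (X : 'I_N -> Om -> Xt) (Y : 'I_N -> Om -> R) (C : 'I_N -> Om -> set R) :=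
  forall (s : 'S_N) (B : 'I_N -> set (Xt * R * set R)),
    (forall i, G (B i)) ->
    P (data_event (fun i => X (s i)) (fun i => Y (s i)) (fun i => C (s i)) B)
    = P (data_event X Y C B).

From HB Require Import structures.
From mathcomp Require Import all_boot all_order all_algebra.
From mathcomp Require Import reals zify.
Set Implicit Arguments. Unset Strict Implicit. Unset Printing Implicit Defensive.
Import Order.TTheory GRing.Theory Num.Theory.
Local Open Scope ring_scope.

(* Given the data, (A, pi) is uniform over its valid values, so conditionally on the
   pattern Z = {i | Y_i ∈ C_i} and on pi, the test set T is a uniform m-subset of the set U
   of the n - k + m indices not chosen by pi, while S_k = |U ∩ Z| does not depend on T.
   Splitting each T with a marked point i ∈ T ∩ Z as T' + i turns the sum over T of
   |T ∩ Z| / (1 + |(U ∩ Z) \ T|) into a sum over the (m-1)-subsets T' of U of terms at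
   most 1 (each i ∈ (U ∩ Z) \ T' contributes 1 / |(U ∩ Z) \ T'|).  Hence the conditional
   mean of M_k is at most C(n-k+m, m-1) / C(n-k+m, m) = m / (n-k+1) whatever the data. *)

Lemma sum_draws_pointed (V : nmodType) (I : finType) (U : {set I}) (l : nat)
    (F : {set I} -> I -> V) :
  \sum_(T : {set I} | (T \subset U) && (#|T| == l.+1)%N) \sum_(i in T) F T i
  = \sum_(T : {set I} | (T \subset U) && (#|T| == l)%N) \sum_(i in U :\: T) F (i |: T) i.
Proof.
rewrite (exchange_big_dep xpredT) //= [RHS](exchange_big_dep xpredT) //=.
apply: eq_bigr => i _.
rewrite (reindex_onto (fun T => i |: T) (fun T => T :\ i)) /=; last first.
  by move=> T /andP[_ iT]; rewrite setD1K.
apply: eq_bigl => T; rewrite setU11 andbT in_setD.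
have [iT|iT] := boolP (i \in T).
  suff -> : ((i |: T) :\ i == T) = false by rewrite /= !andbF.
  by apply/negbTE/eqP => eTi; move: iT; rewrite -eTi setD11.
rewrite setU1K // eqxx andbT subUset sub1set cardsU1 iT add1n eqSS.
by case: (i \in U); rewrite /= ?andbT ?andbF.
Qed.

Lemma sum_insert_ratio_le1 (R : numFieldType) (I : finType) (U Z T : {set I}) :
  \sum_(i in U :\: T)
     ((i \in Z)%:R / (1 + #|(U :&: Z) :\: (i |: T)|)%N%:R : R) <= 1.
Proof.
set D := (U :&: Z) :\: T.
have -> : \sum_(i in U :\: T) ((i \in Z)%:R / (1 + #|(U :&: Z) :\: (i |: T)|)%N%:R : R)
    = \sum_(i in D) (#|D|%:R)^-1.
  rewrite [LHS]big_mkcond [RHS]big_mkcond; apply: eq_bigr => i _.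
  have [iD|iD] := boolP (i \in D); last first.
    by case: ifP => //; move: iD; rewrite !inE;
      case: (i \in T); case: (i \in U); case: (i \in Z); rewrite ?mul0r.
  move: (iD); rewrite !inE => /and3P[iT iU iZ]; rewrite iT iU iZ mul1r.
  have -> : (U :&: Z) :\: (i |: T) = D :\ i.
    by apply/setP => x; rewrite !inE; case: (x == i); case: (x \in T).
  by rewrite (cardsD1 i D) iD.
rewrite sumr_const; have [->|D0] := eqVneq #|D| 0%N; first by rewrite mulr0n ler01.
by rewrite -[_ *+ _]mulr_natr mulVf ?pnatr_eq0.
Qed.

Lemma sum_draws_hit_ratio_le (R : numFieldType) (I : finType) (U Z : {set I})
    (l : nat) :
  \sum_(T : {set I} | (T \subset U) && (#|T| == l.+1)%N)
     (#|T :&: Z|%:R / (1 + #|(U :&: Z) :\: T|)%N%:R : R)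
  <= 'C(#|U|, l)%:R.
Proof.
have hits T : #|T :&: Z|%:R = \sum_(i in T) (i \in Z)%:R :> R.
  rewrite -sumr_const [RHS]big_mkcond [LHS]big_mkcond /=.
  by apply: eq_bigr => i _; rewrite in_setI; case: (i \in T); case: (i \in Z).
under eq_bigr => T _ do rewrite hits mulr_suml.
rewrite sum_draws_pointed -cards_draws -sumr_const big_mkcond [X in _ <= X]big_mkcond /=.
apply: ler_sum => T _; rewrite inE; case: ifP => // _.
exact: sum_insert_ratio_le1.
Qed.

Lemma psumr_outside_eq0 (R : numDomainType) (I : finType) (a : pred I) (F : I -> R) :
  (forall i, 0 <= F i) -> \sum_(i | a i) F i = \sum_i F i ->
  forall i, ~~ a i -> F i = 0.
Proof.
move=> F_ge0 sum_a i ai.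
move: sum_a; rewrite [in RHS](bigID a) /= -{1}[\sum_(i | a i) F i]addr0.
by move=> /addrI /esym /psumr_eq0P; apply=> // j _; exact: F_ge0.
Qed.

Lemma sum_triple (V : nmodType) (I J L : finType) (F : I * J * L -> V) :
  \sum_v F v = \sum_i \sum_j \sum_l F (i, j, l).
Proof.
by rewrite !pair_bigA; apply: eq_bigr => -[[]].
Qed.

Section AcsSets.
Variables (n m k : nat).
Local Notation N := (n + m)%N.
Implicit Types (p : {ffun 'I_k -> 'I_N}) (T Zs : {set 'I_N}).

Definition acs_valid p T : bool :=
  @valid_A n m (fun i => i \in T) && @valid_pi n m k (fun i => i \in T) p.

Definition kept p : {set 'I_N} := ~: @removed n m k p.

Lemma subset_keptE p T : (T \subset kept p) = [forall j, p j \notin T].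
Proof.
apply/subsetP/forallP => [Tk j | pT i iT].
  by apply/negP => /Tk; rewrite /kept /removed !inE imset_f.
rewrite /kept /removed !inE; apply/imsetP => -[j _ eij].
by move: (pT j); rewrite -eij iT.
Qed.

Lemma acs_validE p T :
  acs_valid p T = [&& injectiveb p, T \subset kept p & #|T| == m].
Proof.
rewrite /acs_valid /valid_pi.
have -> : @valid_A n m (fun i => i \in T) = (#|T| == m).
  have cT := cardsC T; rewrite card_ord in cT.
  rewrite /valid_A (@eq_card _ [pred i | i \notin T] (~: T)) => [|i]; last by rewrite !inE.
  by apply/eqP/eqP; lia.
by rewrite -subset_keptE andbC -andbA.
Qed.

Lemma card_acs_valid :
  (\sum_p #|[set T | acs_valid p T]| = 'C(n + m, n) * n ^_ k)%N.
Proof.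
have fiber T : #|[set p | acs_valid p T]| = if #|T| == m then n ^_ k else 0%N.
  case: eqP => Tm; last first.
    move/eqP/negPf: Tm => Tm.
    by apply/eqP; rewrite cards_eq0; apply/eqP/setP => p; rewrite !inE acs_validE Tm !andbF.
  have cT : #|~: T| = n.
    by have := cardsC T; rewrite card_ord Tm; lia.
  have -> : (n ^_ k = #|~: T| ^_ #|'I_k|)%N by rewrite cT card_ord.
  rewrite -card_inj_ffuns_on; apply: eq_card => p.
  rewrite !inE acs_validE Tm eqxx andbT andbC subset_keptE; congr (_ && _).
  by apply: eq_forallb => j; rewrite inE.
transitivity (\sum_T #|[set p | acs_valid p T]|); last first.
  rewrite (eq_bigr _ (fun T _ => fiber T)) -big_mkcond /= sum_nat_const.
  congr (_ * _)%N.
  by rewrite -cardsE card_draws card_ord -bin_sub ?leq_addl // addnK.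
rewrite (eq_bigr (fun p => \sum_(T | acs_valid p T) 1)%N); last first.
  by move=> p _; rewrite -sum1_card; apply: eq_bigl => T; rewrite inE.
rewrite (exchange_big_dep xpredT) //=.
by apply: eq_bigr => T _; rewrite -sum1_card; apply: eq_bigl => p; rewrite inE.
Qed.

Lemma Nminus_setE Zs p T :
  @Nminus n m k (fun i => i \in T) (fun i => i \in Zs) p = (kept p :&: Zs) :\: T.
Proof.
by apply/setP => i; rewrite !inE; case: (i \in T); case: (i \in Zs); rewrite ?andbF ?andbT.
Qed.

Lemma Pset_H0set_setE Zs p T : T \subset kept p ->
  @Pset n m k (fun i => i \in T) p :&: @H0set n m (fun i => i \in T) (fun i => i \in Zs)
  = T :&: Zs.
Proof.
move=> /subsetP Tk; apply/setP => i; rewrite !inE.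
case iT: (i \in T); rewrite ?andbF //= andbT.
by have := Tk i iT; rewrite inE => ->.
Qed.

Lemma acsS_setE Zs p T : T \subset kept p ->
  @acsS n m k (fun i => i \in T) (fun i => i \in Zs) p = #|kept p :&: Zs|.
Proof.
move=> Tk; rewrite /acsS Pset_H0set_setE // Nminus_setE -(cardsID T (kept p :&: Zs)).
by rewrite setIAC (setIidPr Tk).
Qed.

Hypothesis k_le_n : (k <= n)%N.

Lemma card_kept p : injectiveb p -> #|kept p| = (n - k + m)%N.
Proof.
move/injectiveP => p_inj; have := cardsC (@removed n m k p).
by rewrite /kept /removed card_imset // !card_ord; lia.
Qed.

Variable R : realType.

Lemma acsM_setE Zs p T : T \subset kept p ->
  @acsM n m k R (fun i => i \in T) (fun i => i \in Zs) p
  = #|T :&: Zs|%:R / (1 + #|(kept p :&: Zs) :\: T|)%N%:R.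
Proof. by move=> Tk; rewrite /acsM Pset_H0set_setE // Nminus_setE. Qed.

Hypothesis m_gt0 : (0 < m)%N.

Lemma sum_acsM_valid_le Zs p :
  \sum_(T | acs_valid p T) @acsM n m k R (fun i => i \in T) (fun i => i \in Zs) p
  <= m%:R / (n - k + 1)%N%:R * #|[set T | acs_valid p T]|%:R.
Proof.
have [p_inj|p_ninj] := boolP (injectiveb p); last first.
  rewrite big_pred0 => [|T]; last by rewrite acs_validE (negPf p_ninj).
  by rewrite mulr_ge0 ?divr_ge0.
have [l Ml] : exists l, m = l.+1 by exists m.-1; rewrite prednK.
have validE T : acs_valid p T = (T \subset kept p) && (#|T| == l.+1).
  by rewrite acs_validE p_inj -Ml.
rewrite (eq_bigl _ _ validE); under eq_bigr => T /andP[Tk _] do rewrite acsM_setE //.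
apply: (le_trans (sum_draws_hit_ratio_le R (kept p) Zs l)).
have -> : [set T | acs_valid p T] = [set T : {set 'I_N} | T \subset kept p & #|T| == l.+1].
  by apply/setP => T; rewrite !inE validE.
rewrite cards_draws card_kept // mulrAC ler_pdivlMr ?ltr0n ?addn1 //.
have := mul_bin_left (n - k + m) l; rewrite (_ : n - k + m - l = (n - k).+1)%N; last lia.
by move=> e; rewrite -!natrM ler_nat [X in (X <= _)%N]mulnC -e -Ml.
Qed.

Lemma sum_acsM_acsS_valid_le (h : nat -> R) Zs p : (forall s, 0 <= h s) ->
  \sum_(T | acs_valid p T)
     @acsM n m k R (fun i => i \in T) (fun i => i \in Zs) p
     * h (@acsS n m k (fun i => i \in T) (fun i => i \in Zs) p)
  <= m%:R / (n - k + 1)%N%:R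
     * \sum_(T | acs_valid p T) h (@acsS n m k (fun i => i \in T) (fun i => i \in Zs) p).
Proof.
move=> h_ge0.
have acsS_valid T : acs_valid p T ->
    @acsS n m k (fun i => i \in T) (fun i => i \in Zs) p = #|kept p :&: Zs|.
  by rewrite acs_validE => /and3P[_ Tk _]; rewrite acsS_setE.
under eq_bigr => T /acsS_valid -> do [].
under [X in _ <= _ * X]eq_bigr => T /acsS_valid -> do [].
rewrite -mulr_suml sumr_const -[h _ *+ _]mulr_natr [h _ * _]mulrC mulrA ler_wpM2r //.
by apply: le_trans (sum_acsM_valid_le Zs p) _; rewrite cardsE.
Qed.

End AcsSets.

From mathcomp Require Import all_classical all_reals all_analysis measurable_realfun.
Local Open Scope classical_set_scope.
Local Open Scope ring_scope.

Lemma ge0_integral_fin_valued (R : realType) (d : measure_display) (Om : measurableType d)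
    (mu : {measure set Om -> \bar R}) (V : finType) (W : Om -> V) (g : V -> R) :
  (forall v, d.-measurable [set w | W w = v]) -> (forall v, 0 <= g v) ->
  (\int[mu]_w (g (W w))%:E = \sum_v (g v)%:E * mu [set w | W w = v])%E.
Proof.
move=> W_meas g_ge0.
have -> : (fun w => (g (W w))%:E) =
    (fun w => \sum_v (g v)%:E * (\1_[set w | W w = v] w)%:E)%E.
  apply: funext => w; rewrite (bigD1 (W w)) //= big1 ?adde0.
    by rewrite indicE mem_set // mule1.
  by move=> v /negPf vW; rewrite indicE memNset ?mule0 //= => /eqP; rewrite eq_sym vW.
rewrite ge0_integral_sum //; last 2 first.
- by move=> v; apply/measurable_EFinP; apply: measurable_funM.
- by move=> v w _; rewrite mule_ge0 // lee_fin.
apply: eq_bigr => v _; rewrite ge0_integralZl_EFin //.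
- by rewrite integral_indic // setIT.
- by apply/measurable_EFinP; exact: measurable_indic.
Qed.

Lemma probability_fineK (R : realType) (d : measure_display) (Om : measurableType d)
    (P : probability Om R) (E : set Om) :
  d.-measurable E -> (fine (P E))%:E = P E.
Proof. by move=> mE; rewrite fineK // fin_num_measure. Qed.

Lemma sum_fine_fibers (R : realType) (d : measure_display) (Om : measurableType d)
    (P : probability Om R) (V : finType) (W : Om -> V) :
  (forall v, d.-measurable [set w | W w = v]) ->
  \sum_v fine (P [set w | W w = v]) = 1.
Proof.
move=> W_meas; apply: EFin_inj; rewrite -sumEFin.
transitivity (\int[P]_w (cst 1%:E) w)%E; last first.
  by rewrite integral_cst // mul1e; exact: probability_setT.
rewrite (ge0_integral_fin_valued P (g := fun=> 1) W_meas) //.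
by apply: eq_bigr => v _; rewrite mul1e; exact: probability_fineK.
Qed.

Lemma integral_indicator_eq (R : realType) (d : measure_display) (Om : measurableType d)
    (mu : {measure set Om -> \bar R}) (T : eqType) (f : Om -> T) (s : T) :
  d.-measurable [set w | f w = s] ->
  (\int[mu]_w ((f w == s)%:R)%:E = mu [set w | f w = s])%E.
Proof.
move=> fs_meas; rewrite -[X in mu X]setIT -integral_indic //.
apply: eq_integral => w _; rewrite indicE.
by have [fws|/eqP fws] := eqVneq (f w) s; [rewrite mem_set|rewrite memNset].
Qed.

Section AcsProbability.
Variables (R : realType) (d : measure_display) (Om : measurableType d).
Variables (P : probability Om R) (Xt : Type) (n m k : nat).
Hypotheses (m_gt0 : (0 < m)%N) (k_le_n : (k <= n)%N).
Local Notation N := (n + m)%N.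
Variables (G : set (set (Xt * R * set R))) (X : 'I_N -> Om -> Xt).
Variables (Y : 'I_N -> Om -> R) (C : 'I_N -> Om -> set R).
Variables (A : Om -> 'I_N -> bool) (pi : Om -> 'I_k -> 'I_N).
Hypothesis G_sigma : sigma_algebra setT G.
Hypothesis data_measurable :
  forall i B, G B -> d.-measurable [set w | B (X i w, Y i w, C i w)].
Hypothesis G_inC : G [set t | inC t].
Hypothesis A_measurable : forall a, d.-measurable [set w | A w = a].
Hypothesis pi_measurable : forall p, d.-measurable [set w | pi w = p].
Hypothesis A_pi_uniform : forall (B : 'I_N -> set (Xt * R * set R)) a p,
  (forall i, G (B i)) -> @valid_A n m a -> @valid_pi n m k a p ->
  (P (data_event X Y C B `&` [set w | A w = a] `&` [set w | pi w = p])
   = P (data_event X Y C B) * ((('C(n + m, n) * n ^_ k)%N%:R)^-1)%:E)%E.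

Local Notation K := (('C(n + m, n) * n ^_ k)%N%:R : R).
Local Notation outcome := ({set 'I_N} * {ffun 'I_k -> 'I_N} * {set 'I_N})%type.
Implicit Types (Zs T : {set 'I_N}) (p : {ffun 'I_k -> 'I_N}) (v : outcome).

Definition acs_inC (w : Om) (i : 'I_N) : bool := inC (X i w, Y i w, C i w).

Definition acs_pattern (w : Om) : {set 'I_N} := [set i | acs_inC w i]%SET.

(* The finite-valued outcome (Z, pi, T) of which M_k and S_k are functions. *)
Definition acs_outcome (w : Om) : outcome :=
  (acs_pattern w, [ffun j => pi w j], [set i | A w i]%SET).

Definition acs_stat (T' : Type)
    (F : ('I_N -> bool) -> ('I_N -> bool) -> ('I_k -> 'I_N) -> T') (v : outcome) : T' :=
  F (fun i => i \in v.2) (fun i => i \in v.1.1) v.1.2.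

Lemma acs_stat_outcome (T' : Type) F w :
  @acs_stat T' F (acs_outcome w) = F (A w) (acs_inC w) (pi w).
Proof.
by rewrite /acs_stat /=; congr F; apply: funext => i; rewrite ?inE ?ffunE.
Qed.

Lemma G_inC_eq (b : bool) : G [set t | inC t = b].
Proof.
case: b => //; case: G_sigma => _ G_setC _.
rewrite (_ : [set t | inC t = false] = setT `\` [set t | inC t]); first exact: G_setC.
by apply/seteqP; split => t /=; [move=> ->|case=> _ /negP/negPf].
Qed.

Lemma acs_pattern_event Zs :
  [set w | acs_pattern w = Zs]
  = data_event X Y C (fun i => [set t | inC t = (i \in Zs)]).
Proof.
apply/seteqP; split => w /=; first by move=> <- i _ /=; rewrite inE.
by move=> Zw; apply/setP => i; rewrite inE; exact: Zw i I.
Qed.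

Lemma measurable_acs_pattern Zs : d.-measurable [set w | acs_pattern w = Zs].
Proof.
rewrite acs_pattern_event; apply: fin_bigcap_measurable => // i _.
exact/data_measurable/G_inC_eq.
Qed.

Lemma acs_outcome_event Zs p T :
  [set w | acs_outcome w = (Zs, p, T)]
  = [set w | acs_pattern w = Zs] `&` [set w | A w = (fun i => i \in T)]
    `&` [set w | pi w = p].
Proof.
apply/seteqP; split => w /=.
  by case=> <- <- <-; split; [split|] => //; apply: funext => i; rewrite ?inE ?ffunE.
rewrite /acs_outcome => -[[<- ->] ->]; congr (_, _, _).
  by apply/ffunP => j; rewrite ffunE.
by apply/setP => i; rewrite inE.
Qed.

Lemma measurable_acs_outcome v : d.-measurable [set w | acs_outcome w = v].
Proof.
case: v => [[Zs p] T]; rewrite acs_outcome_event.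
by apply: measurableI; [apply: measurableI|];
  [exact: measurable_acs_pattern|exact: A_measurable|exact: pi_measurable].
Qed.

Lemma acs_count_gt0 : 0 < K.
Proof. by rewrite ltr0n muln_gt0 bin_gt0 leq_addr ffact_gt0. Qed.

Definition pattern_prob Zs : R := fine (P [set w | acs_pattern w = Zs]).

Lemma acs_outcome_prob_valid Zs p T : acs_valid p T ->
  P [set w | acs_outcome w = (Zs, p, T)] = (pattern_prob Zs / K)%:E.
Proof.
case/andP => vA vP; rewrite /pattern_prob EFinM probability_fineK; last first.
  exact: measurable_acs_pattern.
by rewrite acs_outcome_event acs_pattern_event A_pi_uniform // => i; exact: G_inC_eq.
Qed.

Lemma sum_valid_outcome_prob :
  \sum_(v : outcome | acs_valid v.1.2 v.2) fine (P [set w | acs_outcome w = v]) = 1.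
Proof.
rewrite -(sum_fine_fibers P measurable_acs_pattern) big_mkcond sum_triple.
apply: eq_bigr => Zs _; rewrite -/(pattern_prob Zs).
transitivity (pattern_prob Zs / K
  * (\sum_(p : {ffun 'I_k -> 'I_N}) #|[set T | acs_valid p T]%SET|)%:R).
  rewrite natr_sum mulr_sumr; apply: eq_bigr => p _.
  rewrite -sumr_const mulr_sumr [RHS]big_mkcond; apply: eq_bigr => T _ /=.
  by rewrite inE; case: ifP => // vT; rewrite acs_outcome_prob_valid // mulr1.
by rewrite card_acs_valid mulfVK // lt0r_neq0 // acs_count_gt0.
Qed.

(* The valid outcomes already carry total mass 1, so the others are null. *)
Lemma acs_outcome_prob v :
  P [set w | acs_outcome w = v]
  = ((acs_valid v.1.2 v.2)%:R * (pattern_prob v.1.1 / K))%:E.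
Proof.
case: v => [[Zs p] T] /=.
have [vT|nvT] := boolP (acs_valid p T); first by rewrite mul1r acs_outcome_prob_valid.
rewrite mul0r -(probability_fineK P (measurable_acs_outcome _)); congr EFin.
have := @psumr_outside_eq0 R _ (fun v : outcome => acs_valid v.1.2 v.2)
  (fun v => fine (P [set w | acs_outcome w = v])).
apply=> [v||]; [exact/fine_ge0/measure_ge0| |exact: nvT].
by rewrite sum_valid_outcome_prob (sum_fine_fibers P measurable_acs_outcome).
Qed.

Lemma integral_acs_outcome (f : outcome -> R) : (forall v, 0 <= f v) ->
  (\int[P]_w (f (acs_outcome w))%:E
   = (\sum_Zs pattern_prob Zs / K * \sum_p \sum_(T | acs_valid p T) f (Zs, p, T))%:E)%E.
Proof.
move=> f_ge0; rewrite (ge0_integral_fin_valued P measurable_acs_outcome f_ge0).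
transitivity (\sum_v (f v * ((acs_valid v.1.2 v.2)%:R * (pattern_prob v.1.1 / K)))%:E)%E.
  by apply: eq_bigr => v _; rewrite EFinM; congr (_ * _)%E; exact: acs_outcome_prob.
rewrite sumEFin sum_triple; congr EFin; apply: eq_bigr => Zs _.
rewrite mulr_sumr; apply: eq_bigr => p _; rewrite mulr_sumr [RHS]big_mkcond.
by apply: eq_bigr => T _ /=; case: ifP; rewrite ?mul0r ?mulr0 // mul1r mulrC.
Qed.

Lemma acsM_conditional_bound (h : nat -> R) : (forall s, 0 <= h s) ->
  (\int[P]_w (@acsM n m k R (A w) (acs_inC w) (pi w)
              * h (@acsS n m k (A w) (acs_inC w) (pi w)))%:E
   <= (m%:R / (n - k + 1)%N%:R)%:E
      * \int[P]_w (h (@acsS n m k (A w) (acs_inC w) (pi w)))%:E)%E.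
Proof.
move=> h_ge0.
under eq_integral => w _ do
  rewrite -(acs_stat_outcome (@acsM n m k R)) -(acs_stat_outcome (@acsS n m k)).
under [X in (_ <= _ * X)%E]eq_integral => w _ do
  rewrite -(acs_stat_outcome (@acsS n m k)).
rewrite (integral_acs_outcome (f := fun v => h (acs_stat (@acsS n m k) v))) //.
rewrite (integral_acs_outcome
  (f := fun v => acs_stat (@acsM n m k R) v * h (acs_stat (@acsS n m k) v))); last first.
  by move=> v; rewrite mulr_ge0 // /acs_stat /acsM divr_ge0.
rewrite -EFinM lee_fin mulr_sumr; apply: ler_sum => Zs _.
rewrite mulrCA; apply: ler_wpM2l.
  by rewrite divr_ge0 ?fine_ge0 ?measure_ge0 ?ltW ?acs_count_gt0.
rewrite mulr_sumr; apply: ler_sum => p _; exact: sum_acsM_acsS_valid_le.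
Qed.

Lemma measurable_acsS_eq s :
  d.-measurable [set w | @acsS n m k (A w) (acs_inC w) (pi w) = s].
Proof.
rewrite (_ : [set w | _ = s] = \bigcup_(v in [set v | acs_stat (@acsS n m k) v = s])
                                 [set w | acs_outcome w = v]).
  apply: fin_bigcup_measurable => [|v _]; first exact: finite_finset.
  exact: measurable_acs_outcome.
apply/seteqP; split => w /=.
  by move=> Sw; exists (acs_outcome w); rewrite //= acs_stat_outcome.
by move=> [v /= <- <-]; rewrite acs_stat_outcome.
Qed.

Lemma acsM_conditional_le s :
  (\int[P]_w (@acsM n m k R (A w) (acs_inC w) (pi w)
              * (@acsS n m k (A w) (acs_inC w) (pi w) == s)%:R)%:E
   <= (m%:R / (n - k + 1)%N%:R)%:E
      * P [set w | @acsS n m k (A w) (acs_inC w) (pi w) = s])%E.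
Proof.
rewrite -integral_indicator_eq; last exact: measurable_acsS_eq.
exact: (acsM_conditional_bound (h := fun x => (x == s)%:R)).
Qed.

Lemma acsM_expectation_le :
  (\int[P]_w (@acsM n m k R (A w) (acs_inC w) (pi w))%:E
   <= (m%:R / (n - k + 1)%N%:R)%:E)%E.
Proof.
have P1 : (\int[P]_w (cst 1%:E) w = 1)%E.
  by rewrite integral_cst // mul1e; exact: probability_setT.
have := acsM_conditional_bound (h := fun=> 1) (fun=> ler01).
by under eq_integral do rewrite mulr1; rewrite (_ : (fun=> 1%:E) = cst 1%:E) // P1 mule1.
Qed.

End AcsProbability.

Theorem mainTheorem4 (R : realType) (d : measure_display) (Om : measurableType d)
  (P : probability Om R) (Xt : Type) (n m k : nat)
  (hn : (1 <= n)%N) (hm : (1 <= m)%N) (hk : (k <= n)%N)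
  (G : set (set (Xt * R * set R)))
  (X : 'I_(n + m) -> Om -> Xt) (Y : 'I_(n + m) -> Om -> R)
  (C : 'I_(n + m) -> Om -> set R)
  (A : Om -> 'I_(n + m) -> bool) (pi : Om -> 'I_k -> 'I_(n + m)) :
  (* G is a sigma-algebra on the space of data triples, the data are
     G-measurable, and the event {Y \in C} is G-measurable *)
  sigma_algebra setT G ->
  (forall i B, G B -> d.-measurable [set w | B (X i w, Y i w, C i w)]) ->
  G [set t | inC t] ->
  (* the data are jointly exchangeable *)
  exchangeable P G X Y C ->
  (* A and pi are measurable *)
  (forall a, d.-measurable [set w | A w = a]) ->
  (forall p, d.-measurable [set w | pi w = p]) ->
  (* A is uniform over binary vectors with n zeros, pi is a uniform ordered
     choice of k distinct labeled indices, and (A, pi) is independent of the data *)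
  (forall (B : 'I_(n + m) -> set (Xt * R * set R)) a p,
      (forall i, G (B i)) -> @valid_A n m a -> @valid_pi n m k a p ->
      (P (data_event X Y C B `&` [set w | A w = a] `&` [set w | pi w = p])
       = P (data_event X Y C B)
         * ((('C(n + m, n) * n ^_ k)%N%:R)^-1)%:E)%E) ->
  let z := fun w i => inC (X i w, Y i w, C i w) in
  let Mk := fun w => @acsM n m k R (A w) (z w) (pi w) : R in
  let Sk := fun w => @acsS n m k (A w) (z w) (pi w) in
  let bound := (m%:R / (n - k + 1)%N%:R : R) in
  (* E[M_k | S_k] <= bound, i.e. E[M_k 1{S_k = s}] <= bound * P(S_k = s) for all s *)
  (forall s : nat,
      (\int[P]_w ((Mk w * (Sk w == s)%:R)%:E) <= bound%:E * P [set w | Sk w = s])%E)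
  /\ (\int[P]_w ((Mk w)%:E) <= bound%:E)%E.
Proof.
move=> G_sigma data_meas G_inC _ A_meas pi_meas A_pi_uniform z Mk Sk bound.
split => [s|].
- exact: (acsM_conditional_le hm hk G_sigma data_meas G_inC A_meas pi_meas A_pi_uniform s).
- exact: (acsM_expectation_le hm hk G_sigma data_meas G_inC A_meas pi_meas A_pi_uniform).
Qed.
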